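(* Let $N,s\in\mathbb{N}$ with $N>2$ and $1\le s<N$, and let $t\in\mathbb{R}$ with $0<t<s$. Then there exist unique $\lambda=\lambda(s,t)\in\left[\frac{\pi}{2}-\frac{\pi}{2N}s,\frac{\pi}{2}\right)$ and $C=C(s,t)\in(0,\pi)$ such that $$\delta(\lambda,C)\equiv\frac{\pi}{N}s\quad\text{and}\quad\beta(\lambda,C)\equiv-\frac{\pi}{N}t.$$ Furthermore: (i) $\lambda(s,\frac{s}{2})=\frac{\pi}{2}-\frac{\pi}{2N}s$ and $C(s,\frac{s}{2})=\frac{\pi}{2}$; (ii) for fixed $s$, $\lambda(s,-)$ is two-to-one on $(0,s)$, with $\lambda(s,s-t)=\lambda(s,t)$; (iii) for fixed $s$, $C(s,-)$ is bijective on $(0,s)$, with $C(s,s-t)=\pi-C(s,t)$.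
   Context: $\equiv$ denotes equality modulo $2\pi$. For $\lambda\in[0,\frac{\pi}{2})$ and $\varphi\in\mathbb{R}$ define (modulo $2\pi$) $\beta(\lambda,\varphi)=\varphi-2\arctan\left(\frac{\cos\frac{\lambda}{2}\sin\varphi}{\sin\frac{\lambda}{2}+\cos\frac{\lambda}{2}\cos\varphi}\right)$ and $\delta(\lambda,\varphi)=\beta(\lambda,\varphi+\pi)-\beta(\lambda,\varphi)\equiv\pi-2\arctan(\sin\varphi\tan\lambda)$. *)

From Stdlib Require Import Reals ZArith.
Open Scope R_scope.

Definition cong2pi (a b : R) : Prop := exists k : Z, a - b = 2 * PI * IZR k.

(* When the denominator vanishes the arctan argument is ±∞, so 2 arctan(..) = ±π ≡ π;
   we take the value φ - π there (only the class mod 2π matters). *)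
Definition beta (l phi : R) : R :=
  let den := sin (l / 2) + cos (l / 2) * cos phi in
  if Req_EM_T den 0 then phi - PI
  else phi - 2 * atan (cos (l / 2) * sin phi / den).

Definition delta (l phi : R) : R := beta l (phi + PI) - beta l phi.

Definition lamC_spec (N s : nat) (t l C : R) : Prop :=
  PI / 2 - PI / (2 * INR N) * INR s <= l < PI / 2 /\
  0 < C < PI /\
  cong2pi (delta l C) (PI / INR N * INR s) /\
  cong2pi (beta l C) (- (PI / INR N * t)).

From Stdlib Require Import Reals ZArith Lra Lia Psatz.
Open Scope R_scope.

(* Put [psi = pi/4 - lambda/2], [u = tan psi], [v = tan (C/2)], [sigma = pi s/(2N)] and
   [theta = pi t/(2N)].  In half-angle form [beta (lambda, C) = -2 atan (u v)] and
   [beta (lambda, C + pi) = 2 atan (u / v)] modulo [2 pi], and for angles in the allowed ranges the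
   two congruences say exactly [u v = tan theta] and [u / v = tan (sigma - theta)].  So [u^2] and
   [v^2] are the product and the ratio of [tan theta] and [tan (sigma - theta)], which determines
   [lambda] and [C].  With [phi = 2 theta - sigma] the product is
   [(cos phi - cos sigma) / (cos phi + cos sigma)], a function of [|phi|] that is largest at
   [phi = 0]; the ratio is [(sin sigma + sin phi) / (sin sigma - sin phi)], an increasing bijection
   from [(-sigma, sigma)] onto [(0, +oo)].  This gives the range of [lambda] and (i)-(iii). *)

Lemma cong2pi_sym a b : cong2pi a b -> cong2pi b a.
Proof. intros [k Hk]. exists (- k)%Z. rewrite opp_IZR. lra. Qed.

Lemma cong2pi_trans a b c : cong2pi a b -> cong2pi b c -> cong2pi a c.
Proof. intros [k Hk] [j Hj]. exists (k + j)%Z. rewrite plus_IZR. lra. Qed.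

Lemma cong2pi_sub a b a' b' : cong2pi a a' -> cong2pi b b' -> cong2pi (a - b) (a' - b').
Proof. intros [k Hk] [j Hj]. exists (k - j)%Z. rewrite minus_IZR. lra. Qed.

Lemma cong2pi_double x y : sin (x - y) = 0 -> cong2pi (2 * x) (2 * y).
Proof. intros H. destruct (sin_eq_0_0 _ H) as [k Hk]. exists k. lra. Qed.

Lemma cong2pi_eq a b : cong2pi a b -> - (2 * PI) < a - b < 2 * PI -> a = b.
Proof.
  intros [k Hk] Hab. pose proof PI_RGT_0.
  destruct (Z.lt_total k 0) as [Hk0 | [-> | Hk0]].
  - assert (IZR k <= -1) by (apply IZR_le; lia). nra.
  - simpl in Hk. lra.
  - assert (1 <= IZR k) by (apply IZR_le; lia). nra.
Qed.

Lemma cos_atan_pos r : 0 < cos (atan r).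
Proof. apply cos_gt_0; pose proof (atan_bound r); lra. Qed.

Lemma sin_atan_cos r : sin (atan r) = r * cos (atan r).
Proof.
  pose proof (cos_atan_pos r). rewrite <- (tan_atan r) at 2. unfold tan. field. lra.
Qed.

Lemma atan_inj x y : atan x = atan y -> x = y.
Proof. intros E. now rewrite <- (tan_atan x), <- (tan_atan y), E. Qed.

Lemma atan_le x y : x <= y -> atan x <= atan y.
Proof. intros [Hlt | ->]; [now apply Rlt_le, atan_increasing | apply Rle_refl]. Qed.

Lemma atan_eq_iff x th : - (PI / 2) < th < PI / 2 -> (atan x = th <-> x = tan th).
Proof.
  intros Hth. split.
  - intros <-. now rewrite tan_atan.
  - intros ->. now apply atan_tan.
Qed.

Lemma atan_sqrt_inj x y : 0 <= x -> 0 <= y -> atan (sqrt x) = atan (sqrt y) -> x = y.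
Proof. intros Hx Hy E. apply sqrt_inj; auto. now apply atan_inj. Qed.

Lemma atan_sqrt_pos x : 0 < x -> 0 < atan (sqrt x).
Proof. intros Hx. rewrite <- atan_0. apply atan_increasing, sqrt_lt_R0, Hx. Qed.

Lemma tan_add_PI2 x : sin x <> 0 -> cos x <> 0 -> tan (x + PI / 2) = - / tan x.
Proof. intros. unfold tan. rewrite sin_plus, cos_plus, sin_PI2, cos_PI2. field. auto. Qed.

Lemma tan_mul_tan a b : cos a <> 0 -> cos b <> 0 ->
  tan a * tan b = (cos (a - b) - cos (a + b)) / (cos (a - b) + cos (a + b)).
Proof.
  intros Ha Hb.
  assert (Hden : cos (a - b) + cos (a + b) = 2 * cos a * cos b)
    by (rewrite cos_minus, cos_plus; ring).
  unfold tan. rewrite Hden, cos_minus, cos_plus. field. auto.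
Qed.

Lemma tan_div_tan a b : cos a <> 0 -> cos b <> 0 -> sin b <> 0 ->
  tan a / tan b = (sin (a + b) + sin (a - b)) / (sin (a + b) - sin (a - b)).
Proof.
  intros Ha Hb Hsb.
  assert (Hden : sin (a + b) - sin (a - b) = 2 * cos a * sin b)
    by (rewrite sin_minus, sin_plus; ring).
  unfold tan. rewrite Hden, sin_minus, sin_plus. field. auto.
Qed.

Lemma cos_eq_cos x y : - PI <= x <= PI -> - PI <= y <= PI -> cos x = cos y -> y = x \/ y = - x.
Proof.
  intros Hx Hy E.
  destruct (Rle_or_lt 0 x), (Rle_or_lt 0 y).
  - left. symmetry. apply cos_inj; lra.
  - right. rewrite <- (cos_neg y) in E. apply cos_inj in E; lra.
  - right. rewrite <- (cos_neg x) in E. apply cos_inj in E; lra.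
  - left. rewrite <- (cos_neg x), <- (cos_neg y) in E. apply cos_inj in E; lra.
Qed.

Lemma sub_div_add_le_iff c x y : 0 < c -> 0 < x + c -> 0 < y + c ->
  ((x - c) / (x + c) <= (y - c) / (y + c) <-> x <= y).
Proof.
  intros Hc Hx Hy.
  replace ((x - c) / (x + c)) with (1 - 2 * c / (x + c)) by (field; lra).
  replace ((y - c) / (y + c)) with (1 - 2 * c / (y + c)) by (field; lra).
  split; intros H.
  - apply Rnot_lt_le. intros Hyx.
    assert (2 * c / (y + c) > 2 * c / (x + c)).
    { unfold Rdiv. apply Rmult_lt_compat_l; [lra|]. apply Rinv_lt_contravar; nra. }
    lra.
  - assert (2 * c / (y + c) <= 2 * c / (x + c)).
    { unfold Rdiv. apply Rmult_le_compat_l; [lra|]. apply Rinv_le_contravar; lra. }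
    lra.
Qed.

Lemma mul_div_eq_iff_sqrt (u v a b : R) : 0 < u -> 0 < v -> 0 < a -> 0 < b ->
  (u * v = a /\ u / v = b) <-> (u = sqrt (a * b) /\ v = sqrt (a / b)).
Proof.
  intros Hu Hv Ha Hb. split.
  - intros [<- <-]. split; symmetry; apply sqrt_lem_1.
    + apply Rlt_le, Rmult_lt_0_compat; [nra | apply Rdiv_lt_0_compat; lra].
    + lra.
    + field. lra.
    + apply Rlt_le, Rdiv_lt_0_compat; [nra | apply Rdiv_lt_0_compat; lra].
    + lra.
    + field. lra.
  - intros [Eu Ev].
    assert (Hu2 : u * u = a * b) by (rewrite Eu; apply sqrt_sqrt; nra).
    assert (Hv2 : v * v = a / b).
    { rewrite Ev. apply sqrt_sqrt. apply Rlt_le, Rdiv_lt_0_compat; lra. }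
    split; apply Rsqr_inj; unfold Rsqr; try nra.
    + replace (u * v * (u * v)) with ((u * u) * (v * v)) by ring.
      rewrite Hu2, Hv2. field. lra.
    + apply Rlt_le, Rdiv_lt_0_compat; lra.
    + replace (u / v * (u / v)) with ((u * u) / (v * v)) by (field; lra).
      rewrite Hu2, Hv2. field. lra.
Qed.

Lemma beta_double_angle (l g : R) :
  cos (PI / 4 - l / 2) <> 0 -> cos g <> 0 ->
  cong2pi (beta l (2 * g)) (- (2 * atan (tan (PI / 4 - l / 2) * tan g))).
Proof.
  set (ps := PI / 4 - l / 2). intros Hps Hg.
  set (ph := atan (tan ps * tan g)).
  set (D := cos ps * cos g * cos g - sin ps * sin g * sin g).
  pose proof (cos_atan_pos (tan ps * tan g)) as Hph. fold ph in Hph.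
  assert (Hsin : sin (g + ph) = cos ph * ((cos ps + sin ps) * sin g / cos ps)).
  { rewrite sin_plus. unfold ph. rewrite sin_atan_cos. fold ph. unfold tan. field. auto. }
  assert (Hcos : cos (g + ph) = cos ph * (D / (cos ps * cos g))).
  { rewrite cos_plus. unfold ph. rewrite sin_atan_cos. fold ph. unfold D, tan. field. auto. }
  set (c := 1 / sqrt 2).
  assert (Hc : 0 < c) by (apply Rdiv_lt_0_compat; [lra | apply sqrt_lt_R0; lra]).
  assert (Hl2 : l / 2 = PI / 4 - ps) by (unfold ps; ring).
  (* [tan (g + ph)] is the argument of [atan] in [beta l (2 * g)]: the denominator there is
     [2 c D] and vanishes exactly when [cos (g + ph)] does. *)
  assert (Hden : sin (l / 2) + cos (l / 2) * cos (2 * g) = 2 * c * D).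
  { rewrite Hl2, sin_minus, cos_minus, sin_PI4, cos_PI4, cos_2a. fold c. unfold D.
    pose proof (sin2_cos2 g) as H1. unfold Rsqr in H1.
    replace (c * cos ps - c * sin ps)
      with ((c * cos ps - c * sin ps) * (sin g * sin g + cos g * cos g)) by (rewrite H1; ring).
    ring. }
  assert (Hnum : cos (l / 2) * sin (2 * g) = 2 * c * ((cos ps + sin ps) * sin g * cos g)).
  { rewrite Hl2, cos_minus, sin_PI4, cos_PI4, sin_2a. fold c. ring. }
  unfold beta. destruct (Req_EM_T _ _) as [E | E].
  - replace (2 * g - PI) with (2 * (g - PI / 2)) by field.
    replace (- (2 * ph)) with (2 * - ph) by ring.
    apply cong2pi_double.
    replace (g - PI / 2 - - ph) with ((g + ph) - PI / 2) by ring.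
    rewrite sin_minus, sin_PI2, cos_PI2, Hcos.
    assert (HD : D = 0) by nra. rewrite HD. unfold Rdiv. ring.
  - set (X := atan _).
    replace (2 * g - 2 * X) with (2 * (g - X)) by ring.
    replace (- (2 * ph)) with (2 * - ph) by ring.
    apply cong2pi_double.
    replace (g - X - - ph) with ((g + ph) - X) by ring.
    rewrite sin_minus, Hsin, Hcos. unfold X. rewrite sin_atan_cos. rewrite Hnum, Hden.
    assert (D <> 0) by (intro HD; apply E; rewrite Hden, HD; ring).
    field. repeat split; auto; lra.
Qed.

Lemma beta_delta_tan_iff (l C th sg : R) :
  0 <= l < PI / 2 -> 0 < C < PI -> 0 < th < sg -> sg < PI / 2 ->
  (cong2pi (delta l C) (2 * sg) /\ cong2pi (beta l C) (- (2 * th))) <->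
  (tan (PI / 4 - l / 2) * tan (C / 2) = tan th /\
   tan (PI / 4 - l / 2) / tan (C / 2) = tan (sg - th)).
Proof.
  intros Hl HC Hth Hsg. pose proof PI_RGT_0.
  set (u := tan (PI / 4 - l / 2)). set (v := tan (C / 2)).
  assert (Hcu : cos (PI / 4 - l / 2) <> 0) by (apply Rgt_not_eq, cos_gt_0; lra).
  assert (Hcv : cos (C / 2) <> 0) by (apply Rgt_not_eq, cos_gt_0; lra).
  assert (Hsv : sin (C / 2) <> 0) by (apply Rgt_not_eq, sin_gt_0; lra).
  assert (Hu : 0 < u) by (apply tan_gt_0; lra).
  assert (Hv : 0 < v) by (apply tan_gt_0; lra).
  assert (Hb : cong2pi (beta l C) (- (2 * atan (u * v)))).
  { replace C with (2 * (C / 2)) at 1 by field. now apply beta_double_angle. }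
  assert (Hb_PI : cong2pi (beta l (C + PI)) (2 * atan (u / v))).
  { replace (C + PI) with (2 * (C / 2 + PI / 2)) by field.
    replace (2 * atan (u / v)) with (- (2 * atan (u * tan (C / 2 + PI / 2)))).
    - apply beta_double_angle; auto. rewrite cos_plus, sin_PI2, cos_PI2. lra.
    - rewrite tan_add_PI2 by auto. fold v.
      replace (u * - / v) with (- (u / v)) by (field; lra). rewrite atan_opp. ring. }
  assert (Hd : cong2pi (delta l C) (2 * atan (u / v) + 2 * atan (u * v))).
  { unfold delta. replace (2 * atan (u / v) + 2 * atan (u * v))
      with (2 * atan (u / v) - - (2 * atan (u * v))) by ring.
    now apply cong2pi_sub. }
  rewrite <- (atan_eq_iff (u * v) th), <- (atan_eq_iff (u / v) (sg - th)) by lra.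
  pose proof (atan_bound (u * v)). pose proof (atan_bound (u / v)).
  split.
  - intros [Hd_sg Hb_th].
    assert (E1 : - (2 * atan (u * v)) = - (2 * th)).
    { apply cong2pi_eq; [eapply cong2pi_trans; [apply cong2pi_sym, Hb | exact Hb_th] | lra]. }
    assert (E2 : 2 * atan (u / v) + 2 * atan (u * v) = 2 * sg).
    { apply cong2pi_eq; [eapply cong2pi_trans; [apply cong2pi_sym, Hd | exact Hd_sg] | lra]. }
    lra.
  - intros [E1 E2]. split.
    + rewrite E1, E2 in Hd. now replace (2 * sg) with (2 * (sg - th) + 2 * th) by ring.
    + now rewrite E1 in Hb.
Qed.

Section Solution.

Variable sg : R.
Hypothesis Hsg : 0 < sg < PI / 2.

Definition tan_prod (th : R) : R := tan th * tan (sg - th).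
Definition tan_ratio (th : R) : R := tan th / tan (sg - th).
Definition lam_of (th : R) : R := PI / 2 - 2 * atan (sqrt (tan_prod th)).
Definition C_of (th : R) : R := 2 * atan (sqrt (tan_ratio th)).

Lemma tan_angles_pos th : 0 < th < sg -> 0 < tan th /\ 0 < tan (sg - th).
Proof. intros Hth. split; apply tan_gt_0; lra. Qed.

Lemma tan_prod_pos th : 0 < th < sg -> 0 < tan_prod th.
Proof. intros Hth. destruct (tan_angles_pos th Hth). now apply Rmult_lt_0_compat. Qed.

Lemma tan_ratio_pos th : 0 < th < sg -> 0 < tan_ratio th.
Proof. intros Hth. destruct (tan_angles_pos th Hth). now apply Rdiv_lt_0_compat. Qed.

Lemma tan_prod_cos th : 0 <= th <= sg ->
  tan_prod th = (cos (2 * th - sg) - cos sg) / (cos (2 * th - sg) + cos sg).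
Proof.
  intros Hth. pose proof PI_RGT_0. unfold tan_prod.
  rewrite tan_mul_tan by (apply Rgt_not_eq, cos_gt_0; lra).
  now replace (th - (sg - th)) with (2 * th - sg) by ring;
    replace (th + (sg - th)) with sg by ring.
Qed.

Lemma tan_prod_le_iff th1 th2 : 0 <= th1 <= sg -> 0 <= th2 <= sg ->
  (tan_prod th1 <= tan_prod th2 <-> cos (2 * th1 - sg) <= cos (2 * th2 - sg)).
Proof.
  intros H1 H2. pose proof PI_RGT_0.
  rewrite !tan_prod_cos by lra.
  assert (0 < cos sg) by (apply cos_gt_0; lra).
  apply sub_div_add_le_iff; auto;
    apply Rplus_lt_0_compat; auto; apply cos_gt_0; lra.
Qed.

Lemma tan_prod_le_half th : 0 <= th <= sg -> tan_prod th <= tan_prod (sg / 2).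
Proof.
  intros Hth. apply tan_prod_le_iff; try lra.
  replace (2 * (sg / 2) - sg) with 0 by field. rewrite cos_0. apply COS_bound.
Qed.

Lemma tan_prod_reflect th : tan_prod (sg - th) = tan_prod th.
Proof. unfold tan_prod. replace (sg - (sg - th)) with th by ring. apply Rmult_comm. Qed.

Lemma tan_prod_eq_iff th1 th2 : 0 < th1 < sg -> 0 < th2 < sg ->
  (tan_prod th1 = tan_prod th2 <-> th2 = th1 \/ th2 = sg - th1).
Proof.
  intros H1 H2. pose proof PI_RGT_0. split.
  - intros E.
    assert (Ecos : cos (2 * th1 - sg) = cos (2 * th2 - sg)).
    { apply Rle_antisym; apply tan_prod_le_iff; lra. }
    apply cos_eq_cos in Ecos; lra.
  - intros [-> | ->]; [reflexivity | symmetry; apply tan_prod_reflect].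
Qed.

Lemma tan_ratio_reflect th : 0 < th < sg -> tan_ratio (sg - th) = / tan_ratio th.
Proof.
  intros Hth. destruct (tan_angles_pos th Hth).
  unfold tan_ratio. replace (sg - (sg - th)) with th by ring. field. lra.
Qed.

Lemma tan_ratio_lt th1 th2 : 0 < th1 -> th1 < th2 -> th2 < sg -> tan_ratio th1 < tan_ratio th2.
Proof.
  intros H1 H12 H2. pose proof PI_RGT_0.
  destruct (tan_angles_pos th1) as [HT1 HW1]; [lra|].
  destruct (tan_angles_pos th2) as [HT2 HW2]; [lra|].
  assert (tan th1 < tan th2) by (apply tan_increasing; lra).
  assert (tan (sg - th2) < tan (sg - th1)) by (apply tan_increasing; lra).
  unfold tan_ratio, Rdiv.
  apply Rmult_le_0_lt_compat; try lra.
  - apply Rlt_le, Rinv_0_lt_compat; lra.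
  - apply Rinv_lt_contravar; nra.
Qed.

Lemma tan_ratio_inj th1 th2 : 0 < th1 < sg -> 0 < th2 < sg ->
  tan_ratio th1 = tan_ratio th2 -> th1 = th2.
Proof.
  intros H1 H2 E.
  destruct (Rtotal_order th1 th2) as [H | [H | H]]; auto;
    [pose proof (tan_ratio_lt th1 th2) | pose proof (tan_ratio_lt th2 th1)]; lra.
Qed.

(* With [phi = 2 th - sg], [tan_ratio th = (sin sg + sin phi) / (sin sg - sin phi)], which is
   inverted by [asin]. *)
Lemma tan_ratio_surj q : 0 < q -> exists th, 0 < th < sg /\ tan_ratio th = q.
Proof.
  intros Hq. pose proof PI_RGT_0.
  assert (Hs : 0 < sin sg) by (apply sin_gt_0; lra).
  set (x := sin sg * ((q - 1) / (q + 1))).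
  assert (Hx : - sin sg < x < sin sg).
  { unfold x. assert (- 1 < (q - 1) / (q + 1) < 1).
    { split; [apply Rmult_lt_reg_r with (q + 1) | apply Rmult_lt_reg_r with (q + 1)];
        try lra; unfold Rdiv; rewrite Rmult_assoc, Rinv_l; lra. }
    split; nra. }
  assert (Hs1 : sin sg <= 1) by apply SIN_bound.
  set (phi := asin x).
  assert (Hsin : sin phi = x) by (apply sin_asin; lra).
  pose proof (asin_bound x) as Hphi. fold phi in Hphi.
  assert (Hphi_sg : - sg < phi < sg).
  { split; apply sin_increasing_0; try lra; rewrite ?sin_neg; lra. }
  exists ((sg + phi) / 2). split; [lra|].
  unfold tan_ratio.
  rewrite tan_div_tan by (first [apply Rgt_not_eq, cos_gt_0 | apply Rgt_not_eq, sin_gt_0]; lra).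
  replace ((sg + phi) / 2 + (sg - (sg + phi) / 2)) with sg by field.
  replace ((sg + phi) / 2 - (sg - (sg + phi) / 2)) with phi by field.
  rewrite Hsin. unfold x. field. lra.
Qed.

Lemma lam_of_bounds th : 0 < th < sg -> PI / 2 - sg <= lam_of th < PI / 2.
Proof.
  intros Hth. pose proof PI_RGT_0. unfold lam_of.
  pose proof (atan_sqrt_pos _ (tan_prod_pos th Hth)).
  assert (Hhalf : 0 < tan (sg / 2)) by (apply tan_gt_0; lra).
  assert (Hle : sqrt (tan_prod th) <= tan (sg / 2)).
  { rewrite <- (sqrt_square (tan (sg / 2))) by lra.
    apply sqrt_le_1_alt. replace (tan (sg / 2) * tan (sg / 2)) with (tan_prod (sg / 2)).
    - apply tan_prod_le_half; lra.
    - unfold tan_prod. now replace (sg - sg / 2) with (sg / 2) by field. }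
  apply atan_le in Hle. rewrite atan_tan in Hle by lra. lra.
Qed.

Lemma C_of_bounds th : 0 < th < sg -> 0 < C_of th < PI.
Proof.
  intros Hth. unfold C_of.
  pose proof (atan_sqrt_pos _ (tan_ratio_pos th Hth)).
  pose proof (atan_bound (sqrt (tan_ratio th))). lra.
Qed.

Lemma solution_iff th l C : 0 < th < sg ->
  (PI / 2 - sg <= l < PI / 2 /\ 0 < C < PI /\
   cong2pi (delta l C) (2 * sg) /\ cong2pi (beta l C) (- (2 * th))) <->
  (l = lam_of th /\ C = C_of th).
Proof.
  intros Hth. pose proof PI_RGT_0.
  destruct (tan_angles_pos th Hth) as [HT HW].
  assert (Hkey : 0 <= l < PI / 2 -> 0 < C < PI ->
    (cong2pi (delta l C) (2 * sg) /\ cong2pi (beta l C) (- (2 * th))) <->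
    (l = lam_of th /\ C = C_of th)).
  { intros Hl HC.
    rewrite beta_delta_tan_iff, mul_div_eq_iff_sqrt by (try apply tan_gt_0; lra).
    fold (tan_prod th) (tan_ratio th). unfold lam_of, C_of.
    split; intros [E1 E2].
    - rewrite <- E1, <- E2, !atan_tan by lra. split; field.
    - rewrite E1, E2.
      replace (PI / 4 - (PI / 2 - 2 * atan (sqrt (tan_prod th))) / 2)
        with (atan (sqrt (tan_prod th))) by field.
      replace (2 * atan (sqrt (tan_ratio th)) / 2) with (atan (sqrt (tan_ratio th))) by field.
      now rewrite !tan_atan. }
  split.
  - intros [Hl [HC Hcong]]. apply Hkey; auto. lra.
  - intros [El EC]. pose proof (lam_of_bounds th Hth). pose proof (C_of_bounds th Hth).
    rewrite <- El, <- EC in *. repeat split; try lra; apply Hkey; auto; lra.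
Qed.

Lemma lam_of_half : lam_of (sg / 2) = PI / 2 - sg.
Proof.
  pose proof PI_RGT_0. unfold lam_of, tan_prod.
  replace (sg - sg / 2) with (sg / 2) by field.
  rewrite sqrt_square, atan_tan by (try (apply Rlt_le, tan_gt_0); lra). field.
Qed.

Lemma C_of_half : C_of (sg / 2) = PI / 2.
Proof.
  pose proof PI_RGT_0. unfold C_of, tan_ratio.
  replace (sg - sg / 2) with (sg / 2) by field.
  assert (0 < tan (sg / 2)) by (apply tan_gt_0; lra).
  replace (tan (sg / 2) / tan (sg / 2)) with 1 by (field; lra).
  rewrite sqrt_1, atan_1. field.
Qed.

Lemma lam_of_reflect th : lam_of (sg - th) = lam_of th.
Proof. unfold lam_of. now rewrite tan_prod_reflect. Qed.

Lemma lam_of_eq_iff th1 th2 : 0 < th1 < sg -> 0 < th2 < sg ->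
  (lam_of th1 = lam_of th2 <-> th2 = th1 \/ th2 = sg - th1).
Proof.
  intros H1 H2. rewrite <- tan_prod_eq_iff by auto. unfold lam_of. split.
  - intros E. apply atan_sqrt_inj; try (apply Rlt_le, tan_prod_pos; auto). lra.
  - intros ->. reflexivity.
Qed.

Lemma C_of_reflect th : 0 < th < sg -> C_of (sg - th) = PI - C_of th.
Proof.
  intros Hth. pose proof (tan_ratio_pos th Hth). unfold C_of.
  rewrite tan_ratio_reflect, sqrt_inv, atan_inv by (auto; apply sqrt_lt_R0; auto). field.
Qed.

Lemma C_of_inj th1 th2 : 0 < th1 < sg -> 0 < th2 < sg -> C_of th1 = C_of th2 -> th1 = th2.
Proof.
  intros H1 H2 E. apply tan_ratio_inj; auto. unfold C_of in E.
  apply atan_sqrt_inj; try (apply Rlt_le, tan_ratio_pos; auto). lra.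
Qed.

Lemma C_of_surj c : 0 < c < PI -> exists th, 0 < th < sg /\ C_of th = c.
Proof.
  intros Hc. pose proof PI_RGT_0.
  assert (Hv : 0 < tan (c / 2)) by (apply tan_gt_0; lra).
  destruct (tan_ratio_surj (tan (c / 2) * tan (c / 2))) as [th [Hth E]]; [nra|].
  exists th. split; auto. unfold C_of. rewrite E, sqrt_square, atan_tan by lra. field.
Qed.

End Solution.

Definition angle_unit (N : nat) : R := PI / (2 * INR N).
Definition lambda_st (N s : nat) (t : R) : R := lam_of (angle_unit N * INR s) (angle_unit N * t).
Definition C_st (N s : nat) (t : R) : R := C_of (angle_unit N * INR s) (angle_unit N * t).

Section Scaling.

Variables N s : nat.
Hypotheses (Hs1 : (1 <= s)%nat) (HsN : (s < N)%nat).

Lemma angle_unit_bounds : 0 < angle_unit N /\ 0 < angle_unit N * INR s < PI / 2.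
Proof.
  pose proof PI_RGT_0. unfold angle_unit.
  assert (0 < INR s) by (apply lt_0_INR; lia).
  assert (INR s < INR N) by (apply lt_INR; lia).
  assert (Hk : 0 < PI / (2 * INR N)) by (apply Rdiv_lt_0_compat; lra).
  assert (E : PI / (2 * INR N) * INR s = PI / 2 - PI / (2 * INR N) * (INR N - INR s))
    by (field; lra).
  assert (0 < PI / (2 * INR N) * (INR N - INR s)) by (apply Rmult_lt_0_compat; lra).
  assert (0 < PI / (2 * INR N) * INR s) by (apply Rmult_lt_0_compat; lra).
  lra.
Qed.

Lemma time_angle t : 0 < t < INR s -> 0 < angle_unit N * t < angle_unit N * INR s.
Proof. intros Ht. destruct angle_unit_bounds as [Hk _]. split; nra. Qed.

Lemma lamC_spec_iff t l C : 0 < t < INR s ->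
  lamC_spec N s t l C <-> (l = lambda_st N s t /\ C = C_st N s t).
Proof.
  intros Ht. destruct angle_unit_bounds as [Hk Hsg].
  assert (0 < INR N) by (apply lt_0_INR; lia).
  unfold lamC_spec, lambda_st, C_st. fold (angle_unit N).
  replace (PI / INR N * INR s) with (2 * (angle_unit N * INR s)) by (unfold angle_unit; field; lra).
  replace (PI / INR N * t) with (2 * (angle_unit N * t)) by (unfold angle_unit; field; lra).
  apply solution_iff; [auto | now apply time_angle].
Qed.

Lemma lambda_st_half : lambda_st N s (INR s / 2) = PI / 2 - PI / (2 * INR N) * INR s.
Proof.
  unfold lambda_st. replace (angle_unit N * (INR s / 2)) with (angle_unit N * INR s / 2) by field.
  apply lam_of_half, angle_unit_bounds.
Qed.

Lemma C_st_half : C_st N s (INR s / 2) = PI / 2.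
Proof.
  unfold C_st. replace (angle_unit N * (INR s / 2)) with (angle_unit N * INR s / 2) by field.
  apply C_of_half, angle_unit_bounds.
Qed.

Lemma lambda_st_reflect t : lambda_st N s (INR s - t) = lambda_st N s t.
Proof.
  unfold lambda_st.
  replace (angle_unit N * (INR s - t)) with (angle_unit N * INR s - angle_unit N * t) by ring.
  apply lam_of_reflect.
Qed.

Lemma C_st_reflect t : 0 < t < INR s -> C_st N s (INR s - t) = PI - C_st N s t.
Proof.
  intros Ht. unfold C_st.
  replace (angle_unit N * (INR s - t)) with (angle_unit N * INR s - angle_unit N * t) by ring.
  apply C_of_reflect; [apply angle_unit_bounds | now apply time_angle].
Qed.

Lemma lambda_st_eq_iff t1 t2 : 0 < t1 < INR s -> 0 < t2 < INR s ->
  (lambda_st N s t1 = lambda_st N s t2 <-> t2 = t1 \/ t2 = INR s - t1).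
Proof.
  intros H1 H2. destruct angle_unit_bounds as [Hk Hsg].
  unfold lambda_st. rewrite lam_of_eq_iff by (auto; now apply time_angle).
  split; intros [E | E]; [left | right | left | right]; nra.
Qed.

Lemma C_st_inj t1 t2 : 0 < t1 < INR s -> 0 < t2 < INR s -> C_st N s t1 = C_st N s t2 -> t1 = t2.
Proof.
  intros H1 H2 E. destruct angle_unit_bounds as [Hk Hsg].
  apply C_of_inj in E; [nra | auto | now apply time_angle | now apply time_angle].
Qed.

Lemma C_st_surj c : 0 < c < PI -> exists t, 0 < t < INR s /\ C_st N s t = c.
Proof.
  intros Hc. destruct angle_unit_bounds as [Hk Hsg].
  destruct (C_of_surj _ Hsg c Hc) as [th [Hth E]].
  exists (th / angle_unit N). split.
  - split; [apply Rdiv_lt_0_compat; lra |].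
    apply Rmult_lt_reg_l with (angle_unit N); auto. field_simplify; lra.
  - unfold C_st. now replace (angle_unit N * (th / angle_unit N)) with th by (field; lra).
Qed.

End Scaling.

Theorem lemma24 (N s : nat) (HN : (2 < N)%nat) (Hs1 : (1 <= s)%nat) (HsN : (s < N)%nat) :
  (* existence and uniqueness of λ(s,t), C(s,t) *)
  (forall t : R, 0 < t < INR s ->
     exists l C : R, lamC_spec N s t l C /\
       (forall l' C' : R, lamC_spec N s t l' C' -> l' = l /\ C' = C)) /\
  (* properties of the functions λ(s,-), C(s,-) *)
  (forall lam Cf : R -> R,
     (forall t : R, 0 < t < INR s -> lamC_spec N s t (lam t) (Cf t)) ->
     (* (i) *)
     (lam (INR s / 2) = PI / 2 - PI / (2 * INR N) * INR s /\ Cf (INR s / 2) = PI / 2) /\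
     (* (ii) two-to-one, with λ(s,s-t) = λ(s,t) *)
     (forall t1 t2 : R, 0 < t1 < INR s -> 0 < t2 < INR s ->
        (lam t1 = lam t2 <-> (t2 = t1 \/ t2 = INR s - t1))) /\
     (forall t : R, 0 < t < INR s -> lam (INR s - t) = lam t) /\
     (* (iii) C(s,-) bijective from (0,s) onto (0,π), with C(s,s-t) = π - C(s,t) *)
     (forall t1 t2 : R, 0 < t1 < INR s -> 0 < t2 < INR s -> Cf t1 = Cf t2 -> t1 = t2) /\
     (forall c : R, 0 < c < PI -> exists t : R, 0 < t < INR s /\ Cf t = c) /\
     (forall t : R, 0 < t < INR s -> Cf (INR s - t) = PI - Cf t)).
Proof.
  split.
  - intros t Ht. exists (lambda_st N s t), (C_st N s t).
    split; [| intros l' C' H]; now apply lamC_spec_iff.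
  - intros lam Cf Hspec.
    assert (HE : forall t, 0 < t < INR s -> lam t = lambda_st N s t /\ Cf t = C_st N s t)
      by (intros; now apply lamC_spec_iff, Hspec).
    assert (Hs : 0 < INR s) by (apply lt_0_INR; lia).
    assert (Hmid : 0 < INR s / 2 < INR s) by lra.
    assert (Hsym : forall t, 0 < t < INR s -> 0 < INR s - t < INR s) by (intros; lra).
    split; [| split; [| split; [| split; [| split]]]].
    + destruct (HE _ Hmid) as [-> ->]. split; [apply lambda_st_half | apply C_st_half]; auto.
    + intros t1 t2 H1 H2. rewrite (proj1 (HE _ H1)), (proj1 (HE _ H2)). now apply lambda_st_eq_iff.
    + intros t Ht. rewrite (proj1 (HE _ Ht)), (proj1 (HE _ (Hsym _ Ht))). apply lambda_st_reflect.
    + intros t1 t2 H1 H2. rewrite (proj2 (HE _ H1)), (proj2 (HE _ H2)). now apply C_st_inj.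
    + intros c Hc. destruct (C_st_surj N s Hs1 HsN c Hc) as [t [Ht E]].
      exists t. split; auto. now rewrite (proj2 (HE _ Ht)).
    + intros t Ht. rewrite (proj2 (HE _ Ht)), (proj2 (HE _ (Hsym _ Ht))). now apply C_st_reflect.
Qed.
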